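(* Let $k\geq2$ be even, $n>2\ell'_k$, and $p\in\{0,1,2\}^{[\![1,n]\!]^2}$. Let $K^A(p,\ell'_k)=\{v\in J^A(p,\ell'_k):p(v)=0\}$ and $K^B(p,\ell'_k)=\{v\in J^B(p,\ell'_k):p(v)=0\}$. Then (1) $\mathrm{card}(K^B(p,\ell'_k))\leq(1-N_{k-1}^{-1})^{-1}\,\mathrm{card}(J^B(p,\ell'_k))\,f^B_{k-1}$; (2) $\mathrm{card}(K^A(p,\ell'_k))\leq\frac{2}{N'_k}\,\mathrm{card}(J^A(p,\ell'_k))\,f^A_{k-1}$.
   Context: Alphabet $\{0,1,2\}$. Let $(N_k)_{k\geq1}$ be integers with $N_k\geq4$, $\ell_0=2$, $\ell_k=N_k\ell_{k-1}$; let $N'_k\geq2$ be integers dividing $N_k$ with $N_k/N'_k\geq2$, and $\ell'_k=N'_k\ell_{k-1}$. Words: $a_0=01$, $b_0=02$; for odd $k\geq1$, $a_k=(a_{k-1})^{N_k}$ and $b_k=b_{k-1}2^{(N_k-2)\ell_{k-1}}b_{k-1}$; for even $k\geq2$, $a_k=a_{k-1}1^{(N_k-2)\ell_{k-1}}a_{k-1}$ and $b_k=(b_{k-1})^{N_k}$. $f^A_k$ (resp. $f^B_k$) is the number of occurrences of the symbol $0$ in $a_k$ (resp. $b_k$) divided by $\ell_k$. For even $k$: $\widetilde A'_k=\{a_{k-1}1^{(N'_k-1)\ell_{k-1}},\,1^{(N'_k-1)\ell_{k-1}}a_{k-1},\,1^{\ell'_k}\}$ and $\widetilde B'_k=\{(b_{k-1})^{N'_k},2^{\ell'_k}\}$.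 $\widetilde{\widetilde A}'_k$ (resp. $\widetilde{\widetilde B}'_k$) is the set of patterns $q\in\{0,1,2\}^{[\![1,\ell'_k]\!]^2}$ with $q(i,j)=\widetilde q(i)$ for all $(i,j)$, for some $\widetilde q\in\widetilde A'_k$ (resp. $\widetilde B'_k$). With $\sigma^u(p)(v)=p(u+v)$: $I^A(p,\ell'_k)=\{u\in[\![0,n-\ell'_k]\!]^2:(\sigma^up)|_{[\![1,\ell'_k]\!]^2}\in\widetilde{\widetilde A}'_k\}$, $J^A(p,\ell'_k)=\bigcup_{u\in I^A(p,\ell'_k)}(u+[\![1,\ell'_k]\!]^2)$, and $I^B,J^B$ analogously with $\widetilde{\widetilde B}'_k$. *)

From mathcomp Require Import all_boot all_order all_algebra.
Set Implicit Arguments. Unset Strict Implicit. Unset Printing Implicit Defensive.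
Import Order.TTheory GRing.Theory Num.Theory.

Fixpoint ell (N : nat -> nat) (k : nat) : nat :=
  match k with 0 => 2 | k'.+1 => N k'.+1 * ell N k' end.

Definition ell' (N N' : nat -> nat) (k : nat) : nat := N' k * ell N k.-1.

Fixpoint words (N : nat -> nat) (k : nat) : seq nat * seq nat :=
  match k with
  | 0 => ([:: 0; 1], [:: 0; 2])
  | k'.+1 =>
      let: (a, b) := words N k' in
      let Nk := N k'.+1 in
      let l := ell N k' in
      if odd k'.+1 then (flatten (nseq Nk a), b ++ nseq ((Nk - 2) * l) 2 ++ b)
      else (a ++ nseq ((Nk - 2) * l) 1 ++ a, flatten (nseq Nk b))
  end.

Definition wa N k := (words N k).1.
Definition wb N k := (words N k).2.

Definition fA (N : nat -> nat) (k : nat) : rat :=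
  ((count_mem 0 (wa N k))%:R / (ell N k)%:R)%R.
Definition fB (N : nat -> nat) (k : nat) : rat :=
  ((count_mem 0 (wb N k))%:R / (ell N k)%:R)%R.

Definition At' (N N' : nat -> nat) (k : nat) : seq (seq nat) :=
  let a := wa N k.-1 in let l := ell N k.-1 in
  [:: a ++ nseq ((N' k - 1) * l) 1; nseq ((N' k - 1) * l) 1 ++ a;
      nseq (ell' N N' k) 1].
Definition Bt' (N N' : nat -> nat) (k : nat) : seq (seq nat) :=
  let b := wb N k.-1 in
  [:: flatten (nseq (N' k) b); nseq (ell' N N' k) 2].

(* Patterns p on [[1,n]]^2 are functions p : nat -> nat -> nat (1-based
   coordinates); only their values on [[1,n]]^2 matter.
   (sigma^u p)|_{[[1,l]]^2} is the pattern q with q(i,j) = qt(i) for some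
   qt in W (a word of length l). *)
Definition matches (p : nat -> nat -> nat) (u : nat * nat) (l : nat)
    (W : seq (seq nat)) : bool :=
  has (fun qt => (size qt == l) &&
        [forall i : 'I_l, forall j : 'I_l,
           p (u.1 + i.+1) (u.2 + j.+1) == nth 0 qt i]) W.

(* I(p,l) as a set of points u in [[0,n-l]]^2, coded in 'I_n.+1 ^2 *)
Definition Iset (n : nat) (p : nat -> nat -> nat) (l : nat)
    (W : seq (seq nat)) : {set 'I_n.+1 * 'I_n.+1} :=
  [set u : 'I_n.+1 * 'I_n.+1 |
     [&& (u.1 : nat) <= n - l, (u.2 : nat) <= n - l & matches p (val u.1, val u.2) l W]].

Definition Jset (n : nat) (p : nat -> nat -> nat) (l : nat)
    (W : seq (seq nat)) : {set 'I_n.+1 * 'I_n.+1} :=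
  [set w : 'I_n.+1 * 'I_n.+1 | [exists u in Iset n p l W,
     [&& (u.1 : nat) < w.1 <= u.1 + l & (u.2 : nat) < w.2 <= u.2 + l]]].

Definition Kset (n : nat) (p : nat -> nat -> nat) (l : nat)
    (W : seq (seq nat)) : {set 'I_n.+1 * 'I_n.+1} :=
  [set w in Jset n p l W | p w.1 w.2 == 0].

From mathcomp Require Import all_boot all_order all_algebra.
From mathcomp Require Import zify ring.
Import Order.TTheory GRing.Theory Num.Theory.

Set Implicit Arguments.
Unset Strict Implicit.
Unset Printing Implicit Defensive.

(* Every zero of p in J lies in an occurrence, read along the first coordinate,
   of one of the non-constant words: b_{k-1} inside (b_{k-1})^{N'_k}, resp.
   a_{k-1} 1^m or 1^m a_{k-1}.  So card K is at most the number of these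
   occurrences times the number of zeros of the word.  Conversely, the zeros at
   the ends of a_{k-1} and b_{k-1} keep occurrences of the same word in one line
   far apart: occurrences of b 2^M b are at least |b| + M apart and so own
   disjoint stretches of J of that length, giving (1).  Occurrences of a 1^m are
   disjoint, those of 1^m a overlap in at most one cell, and the final 1 of the
   a-block of each a 1^m lies outside all of the latter; adding up the two
   resulting lower bounds on card J gives the factor 2 in (2). *)

Lemma size_flatten_nseq (T : Type) m (s : seq T) :
  size (flatten (nseq m s)) = m * size s.
Proof. by rewrite size_flatten /shape map_nseq sumn_nseq mulnC. Qed.

Lemma flatten_nseqS (T : Type) m (s : seq T) :
  flatten (nseq m.+1 s) = flatten (nseq m s) ++ s.
Proof. by rewrite -addn1 nseqD flatten_cat /= cats0. Qed.

Lemma nth_flatten_nseq (T : Type) (x0 : T) m (s : seq T) j i :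
  j < m -> i < size s -> nth x0 (flatten (nseq m s)) (j * size s + i) = nth x0 s i.
Proof.
elim: m j => [|m IH] [|j] //= lt_j lt_i; rewrite nth_cat.
  by rewrite mul0n add0n lt_i.
by rewrite mulSn -addnA ltnNge leq_addr /= addKn IH.
Qed.

Lemma card_nth_count (T : eqType) (x0 : T) (a : pred T) (s : seq T) :
  #|[set i : 'I_(size s) | a (nth x0 s i)]| = count a s.
Proof.
rewrite -sum1_count (big_nth x0) big_mkord -sum1_card.
by apply: eq_bigl => i; rewrite inE.
Qed.

Section Words.
Variable N : nat -> nat.
Hypothesis N_ge2 : forall j, 0 < j -> 1 < N j.

Lemma words_succ k : words N k.+1 =
  if odd k.+1 then
    (flatten (nseq (N k.+1) (wa N k)),
     wb N k ++ nseq ((N k.+1 - 2) * ell N k) 2 ++ wb N k)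
  else
    (wa N k ++ nseq ((N k.+1 - 2) * ell N k) 1 ++ wa N k,
     flatten (nseq (N k.+1) (wb N k))).
Proof. by rewrite /wa /wb /=; case: (words N k). Qed.

Lemma size_wa k : size (wa N k) = ell N k.
Proof.
elim: k => // k IH; have := N_ge2 (ltn0Sn k).
rewrite {1}/wa words_succ; case: ifP => _ /=.
  by rewrite size_flatten_nseq IH.
rewrite !size_cat size_nseq IH; nia.
Qed.

Lemma size_wb k : size (wb N k) = ell N k.
Proof.
elim: k => // k IH; have := N_ge2 (ltn0Sn k).
rewrite {1}/wb words_succ; case: ifP => _ /=.
  rewrite !size_cat size_nseq IH; nia.
by rewrite size_flatten_nseq IH.
Qed.

Lemma wa_head k : exists s, wa N k = 0 :: s.
Proof.
elim: k => [|k [s IH]]; first by exists [:: 1].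
rewrite {1}/wa words_succ; case: ifP => _ /=; last by rewrite IH; eexists.
by case: (N k.+1) (N_ge2 (ltn0Sn k)) => [|m] //= _; rewrite IH; eexists.
Qed.

Lemma wa_last k : exists s, wa N k = s ++ [:: 0; 1].
Proof.
elim: k => [|k [s IH]]; first by exists [::].
rewrite {1}/wa words_succ; case: ifP => _; last by rewrite {2}IH !catA; eexists.
case: (N k.+1) (N_ge2 (ltn0Sn k)) => [|m] // _.
by rewrite flatten_nseqS IH catA; eexists.
Qed.

Lemma wb_head k : exists s, wb N k = 0 :: s.
Proof.
elim: k => [|k [s IH]]; first by exists [:: 2].
rewrite {1}/wb words_succ; case: ifP => _ /=; first by rewrite IH; eexists.
by case: (N k.+1) (N_ge2 (ltn0Sn k)) => [|m] //= _; rewrite IH; eexists.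
Qed.

End Words.

Definition occurs_at (f : nat -> nat) (s : nat) (v : seq nat) : Prop :=
  forall i, i < size v -> f (s + i.+1) = nth 0 v i.

Lemma occurs_atE f s v x :
  occurs_at f s v -> s < x <= s + size v -> f x = nth 0 v (x - s - 1).
Proof. by move=> occ rng; rewrite -occ; [congr f|]; lia. Qed.
Arguments occurs_atE {f s v x}.

Lemma sandwich_occurrences_apart (b : seq nat) M f s s' :
  nth 0 b 0 = 0 -> 0 < size b -> size b <= M ->
  occurs_at f s (b ++ nseq M 2 ++ b) -> occurs_at f s' (b ++ nseq M 2 ++ b) ->
  s < s' -> s + (size b + M) <= s'.
Proof.
set v := b ++ _ => b0 b_gt0 b_le occ occ' lt_ss'; rewrite leqNgt; apply/negP => close.
have size_v : size v = size b + M + size b by rewrite !size_cat size_nseq addnA.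
have v_mid i : size b <= i < size b + M -> nth 0 v i = 2.
  move=> /andP [lo hi]; rewrite nth_cat ltnNge lo /= nth_cat size_nseq.
  by rewrite ifT ?nth_nseq ?ifT //; lia.
have v_right : nth 0 v (size b + M) = 0.
  by rewrite nth_cat ltnNge leq_addr /= addKn nth_cat size_nseq ltnn subnn.
have near : s' - s < size b.
  have : f (s' + 1) = 0 by rewrite occ' ?nth_cat ?b_gt0 //; lia.
  rewrite (occurs_atE occ) ?size_v; last lia.
  by case: ltnP => // far; rewrite v_mid //; lia.
have : f (s + (size b + M).+1) = 0 by rewrite occ ?v_right // size_v; lia.
by rewrite (occurs_atE occ') ?v_mid ?size_v //; lia.
Qed.

Section PaddedWords.
Variables (a a0 a1 : seq nat) (m : nat).
Hypotheses (a_head : a = 0 :: a1) (a_last : a = a0 ++ [:: 0; 1]) (a_le_m : size a <= m).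

Let size_a : size a = size a0 + 2.
Proof. by rewrite a_last size_cat. Qed.

Let padr_first : nth 0 (a ++ nseq m 1) 0 = 0.
Proof. by rewrite a_head. Qed.

Let padr_zero : nth 0 (a ++ nseq m 1) (size a - 2) = 0.
Proof.
rewrite nth_cat ifT; last lia.
by rewrite size_a addnK a_last nth_cat ltnn subnn.
Qed.

Let padr_ones i : size a - 1 <= i < size a + m -> nth 0 (a ++ nseq m 1) i = 1.
Proof.
move=> /andP [lo hi]; rewrite nth_cat; case: ltnP => i_a.
  have -> : i = size a0 + 1 by lia.
  by rewrite a_last nth_cat ltnNge leq_addr /= addKn.
by rewrite nth_nseq ifT //; lia.
Qed.

Let padl_ones i : i < m -> nth 0 (nseq m 1 ++ a) i = 1.
Proof. by move=> lt_im; rewrite nth_cat size_nseq lt_im nth_nseq lt_im. Qed.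

Let padl_first : nth 0 (nseq m 1 ++ a) m = 0.
Proof. by rewrite nth_cat size_nseq ltnn subnn a_head. Qed.

Let padl_zero : nth 0 (nseq m 1 ++ a) (m + size a - 2) = 0.
Proof.
rewrite nth_cat size_nseq ifF; last lia.
have -> : m + size a - 2 - m = size a0 by lia.
by rewrite a_last nth_cat ltnn subnn.
Qed.

Let size_padr : size (a ++ nseq m 1) = size a + m.
Proof. by rewrite size_cat size_nseq. Qed.

Let size_padl : size (nseq m 1 ++ a) = size a + m.
Proof. by rewrite size_cat size_nseq addnC. Qed.

Lemma padr_occurrences_apart f s s' :
  occurs_at f s (a ++ nseq m 1) -> occurs_at f s' (a ++ nseq m 1) ->
  s < s' -> s + (size a + m) <= s'.
Proof.
move=> occ occ' lt_ss'; rewrite leqNgt; apply/negP => close.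
have near : s' - s < size a - 1.
  have : f (s' + 1) = 0 by rewrite occ' ?padr_first ?size_padr //; lia.
  rewrite (occurs_atE occ) ?size_padr; last lia.
  by case: ltnP => // far; rewrite padr_ones //; lia.
have : f (s' + (size a - 2).+1) = 0 by rewrite occ' ?padr_zero ?size_padr //; lia.
by rewrite (occurs_atE occ) ?padr_ones ?size_padr //; lia.
Qed.

Lemma padl_occurrences_apart f s s' :
  occurs_at f s (nseq m 1 ++ a) -> occurs_at f s' (nseq m 1 ++ a) ->
  s < s' -> s + (size a + m - 1) <= s'.
Proof.
move=> occ occ' lt_ss'; rewrite leqNgt; apply/negP => close.
have near : m <= m + size a - 2 - (s' - s).
  have : f (s + (m + size a - 2).+1) = 0 by rewrite occ ?padl_zero ?size_padl //; lia.
  rewrite (occurs_atE occ') ?size_padl; last lia.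
  have -> : s + (m + size a - 2).+1 - s' - 1 = m + size a - 2 - (s' - s) by lia.
  by case: ltnP => // far; rewrite padl_ones.
have : f (s + m.+1) = 0 by rewrite occ ?padl_first ?size_padl //; lia.
by rewrite (occurs_atE occ') ?padl_ones ?size_padl //; lia.
Qed.

Lemma padr_padl_occurrences_apart f s t :
  occurs_at f s (a ++ nseq m 1) -> occurs_at f t (nseq m 1 ++ a) ->
  t < s + size a -> t + (size a + m) <= s + size a.
Proof.
move=> occ occ' lt_ts; rewrite leqNgt; apply/negP => close.
have ones x : s + size a <= x <= s + size a + m -> f x = 1.
  by move=> rng; rewrite (occurs_atE occ) ?padr_ones ?size_padr //; lia.
case: (leqP (s + size a - t - 1) m) => j_m.
  have : f (t + m.+1) = 0 by rewrite occ' ?padl_first ?size_padl //; lia.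
  by rewrite ones //; lia.
have : f (t + (m + size a - 2).+1) = 0 by rewrite occ' ?padl_zero ?size_padl //; lia.
by rewrite ones //; lia.
Qed.

End PaddedWords.

Definition shift n (c : 'I_n.+1 * 'I_n.+1) (t : nat) : 'I_n.+1 * 'I_n.+1 :=
  (inord (c.1 + t.+1), c.2).

Definition blocks n (C : {set 'I_n.+1 * 'I_n.+1}) d (T : {set 'I_d}) :=
  [set shift ct.1 (val ct.2) | ct : ('I_n.+1 * 'I_n.+1) * 'I_d in setX C T].

Lemma card_blocks_le n (C : {set 'I_n.+1 * 'I_n.+1}) d (T : {set 'I_d}) :
  #|blocks C T| <= #|C| * #|T|.
Proof. by rewrite -cardsX leq_imset_card. Qed.

Lemma card_blocks n (C : {set 'I_n.+1 * 'I_n.+1}) d (T : {set 'I_d}) :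
  (forall c, c \in C -> c.1 + d <= n) ->
  (forall c c', c \in C -> c' \in C -> c.2 = c'.2 -> c.1 < c'.1 -> c.1 + d <= c'.1) ->
  #|blocks C T| = #|C| * #|T|.
Proof.
move=> C_fit C_apart; rewrite -cardsX; apply: card_in_imset.
move=> [[x y] t] [[x' y'] t']; rewrite !inE /= => /andP [cC _] /andP [c'C _] [e eqy].
subst y'; move: (C_fit _ cC) (C_fit _ c'C) (ltn_ord t) (ltn_ord t') => /= fit fit' lt_t lt_t'.
move: e => /(congr1 val); rewrite /= !inordK; [|lia|lia] => e.
case: (ltngtP x x') => [lt|gt|/val_inj eqx].
- by have := C_apart _ _ cC c'C erefl lt; rewrite /=; lia.
- by have := C_apart _ _ c'C cC erefl gt; rewrite /=; lia.
have eqt : t = t' by apply: val_inj; move: e; rewrite eqx /=; lia.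
by rewrite eqx eqt.
Qed.

Lemma matches_cons p u l w w' W :
  matches p u l [:: w, w' & W] = matches p u l [:: w] || matches p u l (w' :: W).
Proof. by rewrite /matches /= orbF. Qed.

Section Grid.
Variables (n : nat) (p : nat -> nat -> nat) (L : nat) (W : seq (seq nat)).

Definition row_occ (v : seq nat) : {set 'I_n.+1 * 'I_n.+1} :=
  [set c : 'I_n.+1 * 'I_n.+1 | (c.1 + size v <= n) && [forall t : 'I_(size v),
     (shift c t \in Jset n p L W) && (p (c.1 + t.+1) c.2 == nth 0 v t)]].

Lemma row_occP v (c : 'I_n.+1 * 'I_n.+1) :
  reflect [/\ c.1 + size v <= n, occurs_at (p^~ c.2) c.1 v
            & forall t, t < size v -> shift c t \in Jset n p L W]
          (c \in row_occ v).
Proof.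
rewrite inE; apply: (iffP andP) => [[fit /forallP occ] | [fit occ inJ]].
  split=> // [i lt_i | t lt_t].
    by have /andP [_ /eqP] := occ (Ordinal lt_i).
  by have /andP [] := occ (Ordinal lt_t).
by split=> //; apply/forallP => t; rewrite inJ //=; apply/eqP; apply: occ.
Qed.

Lemma blocks_row_occ_sub v d (T : {set 'I_d}) :
  d <= size v -> blocks (row_occ v) T \subset Jset n p L W.
Proof.
move=> le_d; apply/subsetP => _ /imsetP [[c t] /setXP [/row_occP [_ _ inJ] _] ->].
by apply: inJ; apply: leq_trans (ltn_ord t) le_d.
Qed.

Lemma card_row_occ_blocks v D d (T : {set 'I_d}) :
  d <= D -> d <= size v ->
  (forall f s s', occurs_at f s v -> occurs_at f s' v -> s < s' -> s + D <= s') ->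
  #|blocks (row_occ v) T| = #|row_occ v| * #|T|.
Proof.
move=> le_dD le_dv apart; apply: card_blocks.
  by move=> [x y] /row_occP [/= fit _ _]; lia.
move=> [x y] [x' y'] /row_occP [_ occ _] /row_occP [_ occ' _] /= eqy lt_xx'.
by subst y'; have /= := apart _ _ _ occ occ' lt_xx'; lia.
Qed.

Lemma Jset_witness w : w \in Jset n p L W ->
  exists2 u, u \in Iset n p L W & (u.1 < w.1 <= u.1 + L) && (u.2 < w.2 <= u.2 + L).
Proof. by rewrite inE => /existsP [u /andP [Iu rng]]; exists u. Qed.

Lemma matches_const (u w : 'I_n.+1 * 'I_n.+1) c :
  matches p (val u.1, val u.2) L [:: nseq L c] ->
  (u.1 < w.1 <= u.1 + L) && (u.2 < w.2 <= u.2 + L) -> p w.1 w.2 = c.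
Proof.
case: u w => [u1 u2] [w1 w2] /=; rewrite /matches /= orbF.
move=> /andP [_ /forallP all_c] rng.
have lt_i : w1 - u1 - 1 < L by lia.
have lt_j : w2 - u2 - 1 < L by lia.
have e1 : u1 + (w1 - u1 - 1).+1 = w1 by lia.
have e2 : u2 + (w2 - u2 - 1).+1 = w2 by lia.
have /forallP /(_ (Ordinal lt_j)) /eqP := all_c (Ordinal lt_i).
by rewrite /= e1 e2 nth_nseq lt_i.
Qed.

Lemma row_occ_of_matches M v (u : 'I_n.+1 * 'I_n.+1) (y : 'I_n.+1) j :
  L <= n -> M * size v = L -> u \in Iset n p L W ->
  matches p (val u.1, val u.2) L [:: flatten (nseq M v)] ->
  u.2 < y <= u.2 + L -> j < M -> (inord (u.1 + j * size v), y) \in row_occ v.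
Proof.
case: u => u1 u2 /= L_le_n ML Iu; rewrite /matches /= orbF => /andP [_ /forallP rows] rng lt_jM.
move: (Iu); rewrite inE => /and3P [/= u1_fit u2_fit _].
have : j.+1 * size v <= L by rewrite -ML leq_mul2r lt_jM orbT.
rewrite mulSn => copy_fit.
apply/row_occP; rewrite /= inordK; last lia.
split=> [|i lt_i|t lt_t]; first lia.
  have lt_row : j * size v + i < L by lia.
  have lt_col : y - u2 - 1 < L by lia.
  have /forallP /(_ (Ordinal lt_col)) /eqP := rows (Ordinal lt_row).
  rewrite /= nth_flatten_nseq //.
  have -> : u2 + (y - u2 - 1).+1 = y by lia.
  by move=> <-; congr p; lia.
rewrite inE; apply/existsP; exists (u1, u2); rewrite Iu /= !inordK; lia.
Qed.

Lemma mem_blocks_row_occ M v (u w : 'I_n.+1 * 'I_n.+1) :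
  L <= n -> M * size v = L -> u \in Iset n p L W ->
  matches p (val u.1, val u.2) L [:: flatten (nseq M v)] ->
  (u.1 < w.1 <= u.1 + L) && (u.2 < w.2 <= u.2 + L) ->
  w \in blocks (row_occ v) [set t : 'I_(size v) | nth 0 v t == p w.1 w.2].
Proof.
case: u w => [u1 u2] [w1 w2] /= L_le_n ML Iu match_u rng.
have v_gt0 : 0 < size v by case: (size v) ML => //; rewrite muln0; lia.
move: (Iu); rewrite inE => /and3P [/= u1_fit _ _].
set i := w1 - u1 - 1; have dec := divn_eq i (size v).
have lt_t : i %% size v < size v by rewrite ltn_mod.
have lt_jM : i %/ size v < M by rewrite ltn_divLR // ML; lia.
have occ : (inord (u1 + i %/ size v * size v), w2) \in row_occ v.
  by apply: (row_occ_of_matches L_le_n ML Iu match_u) => //=; lia.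
have /row_occP [fit row _] := occ.
have e : u1 + i %/ size v * size v + (i %% size v).+1 = w1.
  by rewrite addnS -addnA -divn_eq /i; lia.
apply/imsetP; exists ((inord (u1 + i %/ size v * size v), w2), Ordinal lt_t).
  by rewrite in_setX occ inE /= -row // /= inordK ?e //; lia.
by rewrite /shift /= inordK ?e ?inord_val //; lia.
Qed.

End Grid.

Arguments card_row_occ_blocks {n p L W v D d} T.

Lemma Kset_sandwich_bound n p L N' (b v : seq nat) M :
  v = b ++ nseq M 2 ++ b -> nth 0 b 0 = 0 -> 0 < size b -> size b <= M ->
  N' * size v = L -> L <= n ->
  (size b + M) * #|Kset n p L [:: flatten (nseq N' v); nseq L 2]|
    <= count_mem 0 v * #|Jset n p L [:: flatten (nseq N' v); nseq L 2]|.
Proof.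
move=> ev b0 b_gt0 b_le ML L_le_n; set W := [:: _; _].
have size_v : size v = size b + M + size b by rewrite ev !size_cat size_nseq addnA.
have apart f s s' : occurs_at f s v -> occurs_at f s' v -> s < s' -> s + (size b + M) <= s'.
  by rewrite ev; apply: sandwich_occurrences_apart.
set R := row_occ n p L W v.
have K_le : #|Kset n p L W| <= #|R| * count_mem 0 v.
  rewrite -(card_nth_count 0 (pred1 0)); apply: leq_trans (card_blocks_le _ _).
  apply/subset_leq_card/subsetP => w; rewrite inE => /andP [/Jset_witness [u Iu rng] /eqP pw0].
  have := Iu; rewrite inE matches_cons => /and3P [_ _ /orP [match_u | match_u]].
    by have := mem_blocks_row_occ L_le_n ML Iu match_u rng; rewrite pw0.
  by move: pw0; rewrite (matches_const match_u rng).
have J_ge : #|R| * (size b + M) <= #|Jset n p L W|.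
  rewrite -[size b + M]card_ord -cardsT.
  rewrite -(card_row_occ_blocks _ (leqnn _) _ apart); last by rewrite size_v leq_addr.
  by apply/subset_leq_card/blocks_row_occ_sub; lia.
nia.
Qed.

Lemma two_family_bound L X1 X2 J :
  1 < L -> X1 * L <= J -> X2 * (L - 1) + X1 <= J -> L * (X1 + X2) <= 2 * J.
Proof.
move=> L_gt1 disj1 disj2; case: (leqP X2 X1) => [le21 | lt12].
  have : L * X2 <= L * X1 by rewrite leq_mul2l le21 orbT.
  lia.
have : (L - 2) * X1 <= (L - 2) * X2 by rewrite leq_mul2l ltnW ?orbT.
nia.
Qed.

Lemma Kset_padded_bound n p L (a a0 a1 : seq nat) m :
  a = 0 :: a1 -> a = a0 ++ [:: 0; 1] -> size a <= m -> size a + m = L -> L <= n ->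
  L * #|Kset n p L [:: a ++ nseq m 1; nseq m 1 ++ a; nseq L 1]|
    <= 2 * count_mem 0 a * #|Jset n p L [:: a ++ nseq m 1; nseq m 1 ++ a; nseq L 1]|.
Proof.
move=> a_head a_last a_le_m aL L_le_n; set W := [:: _; _; _].
set w1 := a ++ nseq m 1; set w2 := nseq m 1 ++ a.
have size_w1 : size w1 = L by rewrite size_cat size_nseq.
have size_w2 : size w2 = L by rewrite size_cat size_nseq addnC.
have a_gt1 : 1 < size a by rewrite a_last size_cat addn2.
have apart1 f s s' : occurs_at f s w1 -> occurs_at f s' w1 -> s < s' -> s + L <= s'.
  by rewrite -aL; apply: (padr_occurrences_apart a_head a_last a_le_m).
have apart2 f s s' : occurs_at f s w2 -> occurs_at f s' w2 -> s < s' -> s + (L - 1) <= s'.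
  by rewrite -aL; apply: (padl_occurrences_apart a_head a_last a_le_m).
set R1 := row_occ n p L W w1; set R2 := row_occ n p L W w2.
have zeros_w1 : count_mem 0 w1 = count_mem 0 a by rewrite count_cat count_nseq addn0.
have zeros_w2 : count_mem 0 w2 = count_mem 0 a by rewrite count_cat count_nseq.
have K_le : #|Kset n p L W| <= #|R1| * count_mem 0 a + #|R2| * count_mem 0 a.
  rewrite -{1}zeros_w1 -zeros_w2 -!(card_nth_count 0 (pred1 0)).
  apply: leq_trans (leq_add (card_blocks_le _ _) (card_blocks_le _ _)).
  apply: leq_trans (leq_card_setU _ _); apply/subset_leq_card/subsetP => w.
  rewrite inE => /andP [/Jset_witness [u Iu rng] /eqP pw0].
  have := Iu; rewrite inE !matches_cons => /and3P [_ _ /or3P [match_u | match_u | match_u]].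
  - have flat : matches p (val u.1, val u.2) L [:: flatten (nseq 1 w1)] by rewrite /= cats0.
    have := mem_blocks_row_occ L_le_n (etrans (mul1n _) size_w1) Iu flat rng.
    by rewrite pw0 inE => ->.
  - have flat : matches p (val u.1, val u.2) L [:: flatten (nseq 1 w2)] by rewrite /= cats0.
    have := mem_blocks_row_occ L_le_n (etrans (mul1n _) size_w2) Iu flat rng.
    by rewrite pw0 inE => ->; rewrite orbT.
  - by move: pw0; rewrite (matches_const match_u rng).
have J_ge1 : #|R1| * L <= #|Jset n p L W|.
  rewrite -[X in _ * X <= _](card_ord L) -cardsT.
  rewrite -(card_row_occ_blocks _ (leqnn L) (eq_leq (esym size_w1)) apart1).
  by apply/subset_leq_card/blocks_row_occ_sub; rewrite size_w1.
have lt_a : (size a).-1 < size a by lia.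
have le_aL : size a <= L by lia.
set Q := blocks R1 [set Ordinal lt_a].
set A := blocks R2 [set: 'I_(L - 1)].
have card_Q : #|Q| = #|R1|.
  by rewrite (card_row_occ_blocks _ le_aL _ apart1) ?cards1 ?muln1 ?size_w1.
have card_A : #|A| = #|R2| * (L - 1).
  by rewrite (card_row_occ_blocks _ (leqnn _) _ apart2) ?cardsT ?card_ord ?size_w2 ?leq_subr.
have AQ0 : A :&: Q = set0.
  apply/setP => w; rewrite !inE; apply/negP => /andP [].
  move=> /imsetP [[[x2 y2] t2] /setXP [/row_occP [/= fit2 occ2 _] _] ->].
  move=> /imsetP [[[x1 y1] t1] /setXP [/row_occP [/= fit1 occ1 _] /set1P ->] []].
  rewrite size_w1 in fit1; rewrite size_w2 in fit2.
  have := ltn_ord t2; rewrite /= => lt_t2 /(congr1 val) + eqy; subst y2.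
  rewrite /= !inordK; [|lia|lia] => e.
  have := padr_padl_occurrences_apart a_head a_last a_le_m occ1 occ2; lia.
have J_ge2 : #|R2| * (L - 1) + #|R1| <= #|Jset n p L W|.
  rewrite -card_A -card_Q -cardsUI AQ0 cards0 addn0.
  apply/subset_leq_card; rewrite subUset !blocks_row_occ_sub ?size_w1 ?size_w2 //; lia.
have L_gt1 : 1 < L by lia.
apply: leq_trans (leq_mul (leqnn L) K_le) _.
by rewrite -mulnDl mulnA [2 * _ * _]mulnAC leq_mul2r two_family_bound ?orbT.
Qed.

Section Frequencies.
Local Open Scope ring_scope.

Lemma ler_fB N k (K J : nat) :
  (1 < N k.+1)%N -> (0 < ell N k)%N ->
  ((N k.+1 - 1) * ell N k * K <= count_mem 0 (wb N k.+1) * J)%N ->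
  K%:R <= (1 - (N k.+1)%:R^-1)^-1 * J%:R * fB N k.+1.
Proof.
move=> N_gt1 l_gt0 bound; rewrite /fB /=.
have N1_neq0 : (N k.+1)%:R - 1 != 0 :> rat by rewrite subr_eq0 pnatr_eq1; lia.
have N_neq0 : (N k.+1)%:R != 0 :> rat by rewrite pnatr_eq0; lia.
have l_neq0 : (ell N k)%:R != 0 :> rat by rewrite pnatr_eq0; lia.
have -> : (1 - (N k.+1)%:R^-1)^-1 * J%:R * ((count_mem 0 (wb N k.+1))%:R / (N k.+1 * ell N k)%:R)
    = (count_mem 0 (wb N k.+1) * J)%:R / ((N k.+1 - 1) * ell N k)%:R :> rat.
  by rewrite !natrM natrB 1?ltnW //; field; rewrite N1_neq0 N_neq0 l_neq0.
rewrite ler_pdivlMr; last by rewrite ltr0n muln_gt0 subn_gt0 N_gt1.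
by rewrite -natrM ler_nat mulnC.
Qed.

Lemma ler_fA N k c (K J : nat) :
  (0 < c)%N -> (0 < ell N k)%N ->
  (c * ell N k * K <= 2 * count_mem 0 (wa N k) * J)%N ->
  K%:R <= 2 / c%:R * J%:R * fA N k.
Proof.
move=> c_gt0 l_gt0 bound; rewrite /fA.
have c_neq0 : c%:R != 0 :> rat by rewrite pnatr_eq0; lia.
have l_neq0 : (ell N k)%:R != 0 :> rat by rewrite pnatr_eq0; lia.
have -> : 2 / c%:R * J%:R * ((count_mem 0 (wa N k))%:R / (ell N k)%:R)
    = (2 * count_mem 0 (wa N k) * J)%:R / (c * ell N k)%:R :> rat.
  by rewrite !natrM; field; rewrite c_neq0 l_neq0.
rewrite ler_pdivlMr; last by rewrite ltr0n muln_gt0 c_gt0.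
by rewrite -natrM ler_nat mulnC.
Qed.

End Frequencies.

(* The bound on the values of p and the divisibility N'_k %| N_k are not needed. *)
Theorem lemma3p6 (N N' : nat -> nat)
  (hN : forall j, 1 <= j -> 4 <= N j)
  (hN' : forall j, 1 <= j -> [/\ 2 <= N' j, N' j %| N j & 2 <= N j %/ N' j])
  (k n : nat) (p : nat -> nat -> nat)
  (hk : 2 <= k) (hkeven : ~~ odd k)
  (hn : 2 * ell' N N' k < n)
  (hp : forall x y, 1 <= x <= n -> 1 <= y <= n -> p x y <= 2) :
  ((#|Kset n p (ell' N N' k) (Bt' N N' k)|%:R : rat)
     <= (1 - ((N k.-1)%:R)^-1)^-1
        * (#|Jset n p (ell' N N' k) (Bt' N N' k)|%:R) * fB N k.-1)%R
  /\
  ((#|Kset n p (ell' N N' k) (At' N N' k)|%:R : rat)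
     <= (2 / (N' k)%:R) * (#|Jset n p (ell' N N' k) (At' N N' k)|%:R)
        * fA N k.-1)%R.
Proof.
case: k hk hkeven hn => [|[|k]] // _ k_even L_lt_n.
have k1_odd : odd k.+1 by rewrite -[odd _]negbK.
have N_ge2 j : 0 < j -> 1 < N j by move=> /(hN j); lia.
have N_ge4 := hN k.+1 isT.
have [N'_ge2 _ _] := hN' k.+2 isT.
have L_le_n : ell' N N' k.+2 <= n by lia.
have ell_gt0 j : 0 < ell N j by have [s] := wb_head N_ge2 j; rewrite -size_wb // => ->.
split.
- apply: ler_fB; [exact: N_ge2 | exact: ell_gt0 |].
  have [b1 b_head] := wb_head N_ge2 k.
  have -> : (N k.+1 - 1) * ell N k = size (wb N k) + (N k.+1 - 2) * ell N k.
    by rewrite size_wb //; nia.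
  apply: (@Kset_sandwich_bound n p _ _ (wb N k)) L_le_n.
  + by rewrite {1}/wb words_succ k1_odd.
  + by rewrite b_head.
  + by rewrite b_head.
  + by rewrite size_wb // leq_pmull //; lia.
  + by rewrite size_wb.
- apply: ler_fA; [lia | exact: ell_gt0 |].
  have [a1 a_head] := wa_head N_ge2 k.+1; have [a0 a_last] := wa_last N_ge2 k.+1.
  apply: (@Kset_padded_bound n p (ell' N N' k.+2) _ a0 a1 ((N' k.+2 - 1) * ell N k.+1)
           a_head a_last) L_le_n; rewrite size_wa //.
    by rewrite leq_pmull //; lia.
  rewrite /ell' /=; nia.
Qed.
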